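(* Let $k\ge1$ and let $G$ be a finite $k$-connected graph with $|V_G|\ge k+1$. Then $k\le \mathrm{Ent}(G)\le \mathrm{Cycl}(G)$.
   Context: Graphs are finite and undirected. A graph is $k$-connected if one must remove at least $k$ vertices to disconnect it (by convention $K_m$, $m\ge3$, has connectivity $m-1$). $\mathrm{Cycl}(G)$ (cyclicity) is the minimum size of a feedback vertex set of the symmetric digraph of $G$ (each edge $uv$ viewed as the two arcs $(u,v),(v,u)$, so each edge forms a directed 2-cycle); equivalently the minimum size of an edge cover set, i.e. a set of vertices containing an endpoint of every edge. Entanglement: in the game $\mathrm{Ent}(G,k)$ Thief plays against $k$ cops. Initially no cop is placed and Thief picks a vertex. Each round, Cops may do nothing, place a new cop (at most $k$ in total) on Thief's current vertex, or move a placed cop to Thief's current vertex; then Thief must move along an edge to an adjacent vertex not occupied by a cop, and is caught (Cops win) if he cannot. Infinite plays are won by Thief. $\mathrm{Ent}(G)$ is the least $k$ for which Cops have a winning strategy. *)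

From mathcomp Require Import all_boot.
Set Implicit Arguments. Unset Strict Implicit. Unset Printing Implicit Defensive.

Definition simple_graph (T : finType) (e : rel T) : Prop :=
  symmetric e /\ irreflexive e.

Definition restr_rel (T : finType) (e : rel T) (S : {set T}) : rel T :=
  [rel x y | [&& e x y, x \notin S & y \notin S]].

(* G is k-connected: |V| > k and removing fewer than k vertices leaves a
   connected graph (so K_m has connectivity m-1). *)
Definition k_connected (T : finType) (e : rel T) (k : nat) : Prop :=
  k < #|T| /\
  forall S : {set T}, #|S| < k ->
    forall x y, x \notin S -> y \notin S -> connect (restr_rel e S) x y.

(* Cyclicity: minimum size of an edge cover set (vertex cover). *)
Definition edge_cover (T : finType) (e : rel T) (S : {set T}) : bool :=
  [forall x, forall y, e x y ==> (x \in S) || (y \in S)].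

Lemma cycl_ex (T : finType) (e : rel T) :
  exists n, [exists S : {set T}, edge_cover e S && (#|S| == n)].
Proof.
exists #|[set: T]|; apply/existsP; exists [set: T]; rewrite eqxx andbT.
apply/forallP => x; apply/forallP => y; apply/implyP => _; by rewrite in_setT.
Qed.

Definition Cycl (T : finType) (e : rel T) : nat := ex_minn (cycl_ex e).

(* Cops are indexed by 'I_k; a cop
   configuration maps each cop to its vertex (None = not yet placed).
   A Cops move is None (do nothing) or Some i: put cop i on Thief's current
   vertex (placing it if it was not placed yet, moving it otherwise).
   A Cops strategy maps the history of Thief positions t_0 ... t_n
   (the current one last) to a move. *)
Definition cop_conf (T : finType) (k : nat) := {ffun 'I_k -> option T}.
Definition cop_strategy (T : finType) (k : nat) := seq T -> option 'I_k.

Definition apply_move (T : finType) (k : nat) (c : cop_conf T k)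
    (m : option 'I_k) (v : T) : cop_conf T k :=
  if m is Some i then [ffun j => if j == i then Some v else c j] else c.

(* conf sigma t n = configuration of the cops before Cops' move in round n,
   for the sequence t of Thief positions. *)
Fixpoint conf (T : finType) (k : nat) (sigma : cop_strategy T k)
    (t : nat -> T) (n : nat) : cop_conf T k :=
  match n with
  | 0 => [ffun => None]
  | n'.+1 => apply_move (conf sigma t n') (sigma (mkseq t n'.+1)) (t n')
  end.

(* An infinite play consistent with sigma, i.e. one won by Thief: in every
   round Thief moves along an edge to a vertex not occupied by a cop
   (after Cops' move of that round). *)
Definition thief_escapes (T : finType) (e : rel T) (k : nat)
    (sigma : cop_strategy T k) (t : nat -> T) : Prop :=
  forall n, e (t n) (t n.+1) /\
            forall i : 'I_k, conf sigma t n.+1 i != Some (t n.+1).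

(* Cops have a winning strategy in Ent(G,k): one strategy such that, whatever
   the initial vertex and the Thief moves, no infinite play arises (every play
   ends with Thief unable to move, i.e. caught). *)
Definition cops_win (T : finType) (e : rel T) (k : nat) : Prop :=
  exists sigma : cop_strategy T k, forall t : nat -> T, ~ thief_escapes e sigma t.

From mathcomp Require Import all_boot.
Set Implicit Arguments. Unset Strict Implicit. Unset Printing Implicit Defensive.

(* Lower bound: fewer than k cops occupy fewer than k vertices, and by
   k-connectivity the Thief's current vertex always has a neighbour outside
   any such set, so the Thief can move forever.
   Upper bound: with a vertex cover S, let the cop numbered by u \in S sit on
   u as soon as the Thief visits u.  Each vertex of S can then be visited only
   once, but of two consecutive positions of a play one lies in S, so no
   infinite play exists. *)

Lemma confS (T : finType) (k : nat) (sigma : cop_strategy T k) t n :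
  conf sigma t n.+1 = apply_move (conf sigma t n) (sigma (mkseq t n.+1)) (t n).
Proof. by []. Qed.

Lemma eq_conf (T : finType) (k : nat) (sigma : cop_strategy T k) t t' n :
  (forall i, i < n -> t i = t' i) -> conf sigma t n = conf sigma t' n.
Proof.
elim: n => [//|n IHn] eq_tt' /=.
have eq_hist : mkseq t n.+1 = mkseq t' n.+1.
  by apply/eq_in_map => i; rewrite mem_iota => /andP[_ /eq_tt'].
by rewrite IHn => [|i /ltnW/eq_tt' //]; rewrite eq_hist eq_tt'.
Qed.

Definition occupied (T : finType) (k : nat) (c : cop_conf T k) : {set T} :=
  [set y | [exists i, c i == Some y]].

Lemma card_occupied (T : finType) (k : nat) (c : cop_conf T k) :
  #|occupied c| <= k.
Proof.
have : #|[set c i | i in [set: 'I_k]]| <= k.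
  by apply: leq_trans (leq_imset_card _ _) _; rewrite cardsT card_ord.
rewrite -[#|occupied c|](card_imset _ Some_inj); apply: leq_trans.
apply/subset_leq_card/subsetP => _ /imsetP[y + ->]; rewrite inE => /existsP[i /eqP ci_y].
by apply/imsetP; exists i; rewrite ?inE.
Qed.

Lemma k_connected_neighbor (T : finType) (e : rel T) (k : nat) (S : {set T}) v :
  irreflexive e -> k_connected e k -> #|S| < k -> exists2 y, e v y & y \notin S.
Proof.
move=> irr_e [ltkT conn_e] ltSk.
have ltS'k : #|S :\ v| < k by apply: leq_ltn_trans ltSk; apply/subset_leq_card/subsetDl.
have [y] : exists y, y \notin v |: (S :\ v).
  apply/existsP; rewrite -negb_forall; apply: contraL ltkT => /forallP allin.
  have -> : #|T| = #|v |: (S :\ v)| by apply: eq_card => x; rewrite allin.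
  by rewrite cardsU1 !inE eqxx -leqNgt.
rewrite in_setU1 negb_or => /andP[yv y_out].
have v_out : v \notin S :\ v by rewrite !inE eqxx.
case/connectP: (conn_e _ ltS'k v y v_out y_out) => [[|x p]] /=.
  by move=> _ eq_yv; rewrite eq_yv eqxx in yv.
case/andP=> /and3P[e_vx _ x_out] _ _; exists x => //.
move: x_out; rewrite !inE negb_and negbK => /orP[/eqP eq_xv|] //.
by rewrite eq_xv irr_e in e_vx.
Qed.

Section HistoryPlay.

Variables (T : finType) (x0 : T) (step : seq T -> T).

Fixpoint history n : seq T :=
  if n is n'.+1 then rcons (history n') (step (history n')) else [:: x0].

Definition play n : T := last x0 (history n).

Lemma size_history n : size (history n) = n.+1.
Proof. by elim: n => //= n IHn; rewrite size_rcons IHn. Qed.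

Lemma nth_history n i : i <= n -> nth x0 (history n) i = play i.
Proof.
elim: n => [|n IHn]; first by case: i.
rewrite leq_eqVlt => /predU1P[->|lt_in]; first by rewrite /play -nth_last size_history.
by rewrite /= nth_rcons size_history lt_in IHn.
Qed.

Lemma play_succ n : play n.+1 = step (history n).
Proof. by rewrite /play last_rcons. Qed.

End HistoryPlay.

Lemma thief_escapes_lt (T : finType) (e : rel T) (k m : nat)
    (sigma : cop_strategy T m) :
  irreflexive e -> k_connected e k -> m < k -> exists t, thief_escapes e sigma t.
Proof.
move=> irr_e conn_e lt_mk.
have /card_gt0P[x0 _] : 0 < #|T| by case: conn_e => lt_kT _; apply: leq_ltn_trans lt_kT.
pose free s y := e (last x0 s) y && (y \notin occupied (conf sigma (nth x0 s) (size s))).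
pose step s := odflt x0 [pick y | free s y].
exists (play x0 step) => n; set t := play x0 step.
have conf_t : conf sigma (nth x0 (history x0 step n)) (size (history x0 step n))
              = conf sigma t n.+1.
  by rewrite size_history; apply: eq_conf => i; rewrite ltnS; apply: nth_history.
have [y e_ty y_free] := k_connected_neighbor (last x0 (history x0 step n))
  irr_e conn_e (leq_ltn_trans (card_occupied (conf sigma t n.+1)) lt_mk).
rewrite /t play_succ /step; case: pickP => [z /andP[e_tz] | /(_ y)]; last first.
  by rewrite /free e_ty conf_t y_free.
rewrite conf_t => z_free; split=> // i; apply: contraNneq z_free => ci_z.
by rewrite inE; apply/existsP; exists i; rewrite ci_z.
Qed.

Lemma exists_repeat (T : finType) (f : nat -> T) : exists a b, a < b /\ f a = f b.
Proof.
have : [exists i : 'I_#|T|.+1, exists j : 'I_#|T|.+1, (i < j) && (f i == f j)].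
  apply: contraT; rewrite negb_exists => /forallP no_repeat.
  have lt_no_repeat (i j : 'I_#|T|.+1) : i < j -> f i != f j.
    by move=> lt_ij; move: (no_repeat i); rewrite negb_exists => /forallP/(_ j); rewrite lt_ij.
  have inj_f : injective (fun i : 'I_#|T|.+1 => f i).
    move=> i j eq_f.
    by case: (ltngtP i j) => [/lt_no_repeat|/lt_no_repeat|/val_inj //]; rewrite eq_f eqxx.
  by have := leq_card _ inj_f; rewrite card_ord ltnn.
by case/existsP=> i /existsP[j /andP[lt_ij /eqP eq_f]]; exists i, j.
Qed.

Section CoverStrategy.

Variables (T : finType) (S : {set T}).

Definition cover_strategy : cop_strategy T #|S| :=
  fun h => if h is x :: h' then [pick i | enum_val i == last x h'] else None.

Lemma cover_strategy_mkseq (t : nat -> T) n :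
  cover_strategy (mkseq t n.+1) = [pick i | enum_val i == t n].
Proof.
have : last (t 0) (mkseq t n.+1) = t n by rewrite -nth_last size_mkseq nth_mkseq.
by rewrite /mkseq /= => ->.
Qed.

Lemma conf_cover_strategy (t : nat -> T) n j (i : 'I_#|S|) :
  j < n -> t j = enum_val i -> conf cover_strategy t n i = Some (t j).
Proof.
elim: n => [//|n IHn] lt_jn tj_i; rewrite confS cover_strategy_mkseq.
have eq_or_lt_jn : j = n \/ j < n by apply/predU1P; rewrite -leq_eqVlt -ltnS.
case: pickP => [i0 /eqP i0_tn|no_cop] /=.
  rewrite ffunE; case: eqP => [eq_i|ne_i]; first by rewrite -i0_tn -eq_i -tj_i.
  case: eq_or_lt_jn => [eq_jn|/IHn -> //].
  by case: ne_i; apply: enum_val_inj; rewrite -tj_i i0_tn eq_jn.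
case: eq_or_lt_jn => [eq_jn|/IHn -> //].
by move: (no_cop i); rewrite -tj_i eq_jn eqxx.
Qed.

Lemma cover_visited_once (e : rel T) (t : nat -> T) a b :
  thief_escapes e cover_strategy t -> a < b -> t a \in S -> t b != t a.
Proof.
case: b => // b esc lt_ab ta_S.
have ta_i : t a = enum_val (enum_rank_in ta_S (t a)) by rewrite enum_rankK_in.
have [_ /(_ (enum_rank_in ta_S (t a)))] := esc b.
by rewrite (conf_cover_strategy lt_ab ta_i); apply: contraNneq => ->.
Qed.

Lemma cover_cops_win (e : rel T) : edge_cover e S -> cops_win e #|S|.
Proof.
move=> /forallP cover_S; exists cover_strategy => t esc.
(* Some pair (t 2a, t 2a+1) recurs later, and one of its vertices lies in S. *)
have [a [b [lt_ab [eq_even eq_odd]]]] := exists_repeat (fun n => (t n.*2, t n.*2.+1)).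
have /forallP/(_ (t a.*2.+1))/implyP/(_ (esc a.*2).1) := cover_S (t a.*2).
case/orP=> [/(cover_visited_once esc)|/(cover_visited_once esc)] visited.
  by move: (visited b.*2); rewrite ltn_double eq_even eqxx => /(_ lt_ab).
by move: (visited b.*2.+1); rewrite ltnS ltn_double eq_odd eqxx => /(_ lt_ab).
Qed.

End CoverStrategy.

Theorem mainTheorem7 (T : finType) (e : rel T) (k : nat) :
  simple_graph e -> 1 <= k -> k_connected e k -> k.+1 <= #|T| ->
  (forall m, cops_win e m -> k <= m) /\
  (exists m, m <= Cycl e /\ cops_win e m).
Proof.
move=> [_ irr_e] _ conn_e _; split.
  move=> m [sigma sigma_wins]; rewrite leqNgt; apply/negP => lt_mk.
  by have [t] := thief_escapes_lt sigma irr_e conn_e lt_mk; apply: sigma_wins.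
rewrite /Cycl; case: ex_minnP => m /existsP[S /andP[cover_S /eqP <-]] _.
by exists #|S|; split=> //; apply: cover_cops_win.
Qed.
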